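(* Let $L=\langle S,A,\to\rangle$ be a labelled transition system. For all $x,y\in\{o,b\}$ and $s,t\in S$, if $s\mathrel{\underline{\leftrightarrow}}^{ed}_{(x,y)}t$ then $s\equiv^{ed}_{E(x,y)}t$.
   Context: An LTS is $\langle S,A,\to\rangle$ with states $S$, actions $A$ containing the internal action $\tau$, and $\to\subseteq S\times A\times S$; write $s\xrightarrow{a}t$, $\twoheadrightarrow$ for the reflexive-transitive and $\twoheadrightarrow^+$ for the transitive closure of $\xrightarrow{\tau}$. For $R\subseteq S\times S$ and $s,s',t$: $s\twoheadrightarrow_{o,R,t}s'$ iff $s\twoheadrightarrow s'$; $s\twoheadrightarrow_{b,R,t}s'$ iff $s\twoheadrightarrow s'$, $t\,R\,s$ and $t\,R\,s'$. For $x,y\in\{o,b\}$, a symmetric $R$ is an $(x,y)$-generic bisimulation if whenever $s\,R\,t$ and $s\xrightarrow{a}s'$, either $a=\tau$ and $s'\,R\,t$, or there exist $t',t_1,t_2$ with $t\twoheadrightarrow_{x,R,s}t_1\xrightarrow{a}t_2\twoheadrightarrow_{y,R,s'}t'$ and $s'\,R\,t'$. It is an $(x,y)$-generic bisimulation with explicit divergence if moreover for all $s\,R\,t$, if there is an infinite sequence $s=s_0\xrightarrow{\tau}s_1\xrightarrow{\tau}\cdots$, then there exist $t'$ with $t\twoheadrightarrow^+t'$ and some $k$ with $s_k\,R\,t'$. $s\mathrel{\underline{\leftrightarrow}}^{ed}_{(x,y)}t$ iff some such relation relates $s$ and $t$. Game with explicit divergence. Let $\frown,\smile$ be formal tags and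 $E\subseteq\{\frown,\smile\}$. Spoiler-owned configurations $\langle (s,t),c,m,r\rangle_S$ and Duplicator-owned $\langle (s,t),c,m,r\rangle_D$ have $(s,t)\in S\times S$, $c\in (A\times S)\cup\{\dagger\}$, $m\in (S\times\{\frown,\smile\})\cup\{\dagger\}$, $r\in\{*,\checkmark\}$. From $\langle (s,t),c,m,r\rangle_S$ Spoiler may: (S1) move to $\langle (s,t),c,m,*\rangle_D$ if $c\neq\dagger$; (S2a) for some $s\xrightarrow{a}s'$, move to $\langle (s,t),(a,s'),(t,\frown),*\rangle_D$ if $c=\dagger$; (S2b) for some $s\xrightarrow{a}s'$, move to $\langle (s,t),(a,s'),(t,\frown),\checkmark\rangle_D$ if $c\neq (a,s')$; (S3) for some $t\xrightarrow{a}t'$, move to $\langle (t,s),(a,t'),(s,\frown),\checkmark\rangle_D$. From $\langle (u,v),(a,u'),(\bar v,f),r\rangle_D$ Duplicator may: (D1) move to $\langle (u',\bar v),\dagger,\dagger,*\rangle_S$ if $a=\tau$; (D2) if $f=\frown$ and $\bar v\xrightarrow{a}v'$: (a) move to $\langle (u',v'),(a,u'),(v',\smile),*\rangle_S$, or (b) move to $\langle (u',v'),\dagger,\dagger,\checkmark\rangle_S$, or (c) only if $\smile\in E$, move to $\langle (u,v),(a,u'),(v',\smile),*\rangle_S$; (D3) for some $\bar v\xrightarrow{\tau}v'$: (a) move to $\langle (u,v'),(a,u'),(v',f),*\rangle_S$, or (b) only if $f=\smile$, move to $\langle (u',v'),\dagger,\dagger,\checkmark\rangle_S$, or (c) only if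 $f\in E$, move to $\langle (u,v),(a,u'),(v',f),*\rangle_S$. Duplicator wins a finite play if Spoiler gets stuck, and an infinite play if it has infinitely many $\checkmark$ rewards; other plays are won by Spoiler. $s\equiv^{ed}_E t$ iff Duplicator has a strategy winning all plays from $\langle (s,t),\dagger,\dagger,*\rangle_S$. $E(x,y)$ is the smallest set with $\frown\in E(o,y)$ and $\smile\in E(x,o)$ for all $x,y\in\{o,b\}$. *)

From Stdlib Require Import List.

Record LTS := mkLTS {
  St : Type;
  Act : Type;
  tau : Act;
  trans : St -> Act -> St -> Prop
}.

Inductive taus (L : LTS) : St L -> St L -> Prop :=
| taus_refl s : taus L s s
| taus_step s s' t : trans L s (tau L) s' -> taus L s' t -> taus L s t.

Definition taus_plus (L : LTS) (s t : St L) : Prop :=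
  exists s', trans L s (tau L) s' /\ taus L s' t.

Inductive mode := mo | mb.

Definition arr (L : LTS) (m : mode) (R : St L -> St L -> Prop) (t s s' : St L) : Prop :=
  match m with
  | mo => taus L s s'
  | mb => taus L s s' /\ R t s /\ R t s'
  end.

Definition symmetric_rel (X : Type) (R : X -> X -> Prop) : Prop :=
  forall a b, R a b -> R b a.

Definition generic_bisim (L : LTS) (x y : mode) (R : St L -> St L -> Prop) : Prop :=
  symmetric_rel (St L) R /\
  forall (s t s' : St L) (a : Act L), R s t -> trans L s a s' ->
    (a = tau L /\ R s' t) \/
    exists t' t1 t2, arr L x R s t t1 /\ trans L t1 a t2 /\ arr L y R s' t2 t' /\ R s' t'.

Definition explicit_divergence (L : LTS) (R : St L -> St L -> Prop) : Prop :=
  forall (s t : St L), R s t ->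
  forall (f : nat -> St L), f 0 = s -> (forall i, trans L (f i) (tau L) (f (S i))) ->
    exists t' k, taus_plus L t t' /\ R (f k) t'.

Definition generic_bisim_ed (L : LTS) (x y : mode) (R : St L -> St L -> Prop) : Prop :=
  generic_bisim L x y R /\ explicit_divergence L R.

Definition bisim_ed (L : LTS) (x y : mode) (s t : St L) : Prop :=
  exists R, generic_bisim_ed L x y R /\ R s t.

Inductive tag := Frown | Smile.
Inductive owner := Spoiler | Duplicator.

(* cfg: None encodes the dagger; reward false = *, true = checkmark *)
Record config (L : LTS) := mkCfg {
  cown : owner;
  cpos : St L * St L;
  cch  : option (Act L * St L);
  cmem : option (St L * tag);
  crew : bool
}.
Arguments mkCfg {L}.
Arguments cown {L}. Arguments cpos {L}. Arguments cch {L}.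
Arguments cmem {L}. Arguments crew {L}.

Inductive move (L : LTS) (E : tag -> Prop) : config L -> config L -> Prop :=
| mS1 s t c m r :
    c <> None ->
    move L E (mkCfg Spoiler (s,t) c m r) (mkCfg Duplicator (s,t) c m false)
| mS2a s t m r a s' :
    trans L s a s' ->
    move L E (mkCfg Spoiler (s,t) None m r)
             (mkCfg Duplicator (s,t) (Some (a,s')) (Some (t,Frown)) false)
| mS2b s t c m r a s' :
    trans L s a s' -> c <> Some (a,s') ->
    move L E (mkCfg Spoiler (s,t) c m r)
             (mkCfg Duplicator (s,t) (Some (a,s')) (Some (t,Frown)) true)
| mS3 s t c m r a t' :
    trans L t a t' ->
    move L E (mkCfg Spoiler (s,t) c m r)
             (mkCfg Duplicator (t,s) (Some (a,t')) (Some (s,Frown)) true)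
| mD1 u v a u' vb f r :
    a = tau L ->
    move L E (mkCfg Duplicator (u,v) (Some (a,u')) (Some (vb,f)) r)
             (mkCfg Spoiler (u',vb) None None false)
| mD2a u v a u' vb r v' :
    trans L vb a v' ->
    move L E (mkCfg Duplicator (u,v) (Some (a,u')) (Some (vb,Frown)) r)
             (mkCfg Spoiler (u',v') (Some (a,u')) (Some (v',Smile)) false)
| mD2b u v a u' vb r v' :
    trans L vb a v' ->
    move L E (mkCfg Duplicator (u,v) (Some (a,u')) (Some (vb,Frown)) r)
             (mkCfg Spoiler (u',v') None None true)
| mD2c u v a u' vb r v' :
    trans L vb a v' -> E Smile ->
    move L E (mkCfg Duplicator (u,v) (Some (a,u')) (Some (vb,Frown)) r)
             (mkCfg Spoiler (u,v) (Some (a,u')) (Some (v',Smile)) false)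
| mD3a u v a u' vb f r v' :
    trans L vb (tau L) v' ->
    move L E (mkCfg Duplicator (u,v) (Some (a,u')) (Some (vb,f)) r)
             (mkCfg Spoiler (u,v') (Some (a,u')) (Some (v',f)) false)
| mD3b u v a u' vb r v' :
    trans L vb (tau L) v' ->
    move L E (mkCfg Duplicator (u,v) (Some (a,u')) (Some (vb,Smile)) r)
             (mkCfg Spoiler (u',v') None None true)
| mD3c u v a u' vb f r v' :
    trans L vb (tau L) v' -> E f ->
    move L E (mkCfg Duplicator (u,v) (Some (a,u')) (Some (vb,f)) r)
             (mkCfg Spoiler (u,v) (Some (a,u')) (Some (v',f)) false).

(* A Duplicator strategy maps the history (p 0, ..., p n), whose last
   configuration is Duplicator-owned, to the next configuration. *)
Definition strategy (L : LTS) := list (config L) -> config L.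

Definition history (L : LTS) (p : nat -> config L) (n : nat) : list (config L) :=
  map p (seq 0 (S n)).

Definition consistent_prefix (L : LTS) (E : tag -> Prop) (sigma : strategy L)
    (c0 : config L) (p : nat -> config L) (n : nat) : Prop :=
  p 0 = c0 /\
  forall i, i < n ->
    move L E (p i) (p (S i)) /\
    (cown (p i) = Duplicator -> p (S i) = sigma (history L p i)).

(* sigma wins all plays from c0:
   - Duplicator is never stuck (sigma always prescribes a legal move), so every
     finite maximal play ends with Spoiler stuck (won by Duplicator);
   - every infinite consistent play has infinitely many checkmark rewards. *)
Definition winning_strategy (L : LTS) (E : tag -> Prop) (sigma : strategy L)
    (c0 : config L) : Prop :=
  (forall p n, consistent_prefix L E sigma c0 p n -> cown (p n) = Duplicator ->
     move L E (p n) (sigma (history L p n))) /\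
  (forall p, (forall n, consistent_prefix L E sigma c0 p n) ->
     forall N, exists k, N <= k /\ crew (p k) = true).

Definition game_equiv (L : LTS) (E : tag -> Prop) (s t : St L) : Prop :=
  exists sigma, winning_strategy L E sigma (mkCfg Spoiler (s,t) None None false).

Definition Exy (x y : mode) (f : tag) : Prop :=
  match f with
  | Frown => x = mo
  | Smile => y = mo
  end.

From Stdlib Require Import List Arith Lia Classical ClassicalEpsilon ChoiceFacts.

(* Close the given (x,y)-bisimulation R into the equivalence Q generated by R
   that is also closed under stuttering: if p Q z, p Q z' and z ->> u ->> z',
   then p Q u.  Tracking whole runs s ->> s1 -a-> s2 ->> s' shows that Q is
   again an (x,y)-generic bisimulation, and explicit divergence of R makes every
   divergence inside a Q-class reappear from each member of the class.  Q relates
   every position Duplicator can reach when she plays positionally: on a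
   challenge she follows a shortest plan given by the bisimulation property of Q,
   collecting a checkmark when it completes.  The only unrewarded infinite plays
   are then Spoiler making internal steps that Duplicator answers by stuttering
   from a fixed state t; such a play is a divergence inside the class of t, so t
   has an internal step inside its class, and Duplicator takes that step with a
   checkmark instead of stuttering. *)

Lemma dependent_chain {A : Type} (r : A -> A -> Prop) (P : A -> Prop) (a : A) :
  P a -> (forall v, P v -> exists w, r v w /\ P w) ->
  exists f : nat -> A, f 0 = a /\ forall i, r (f i) (f (S i)) /\ P (f i).
Proof.
  intros Pa Hstep.
  destruct (functional_choice_imp_functional_dependent_choice choice
              (fun v w => P v -> r v w /\ P w)) with (x0 := a) as [f [f0 Hf]].
  - intros v. destruct (classic (P v)) as [Pv | nPv].
    + destruct (Hstep v Pv) as [w Hw]; eauto.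
    + exists v; tauto.
  - assert (HP : forall i, P (f i)) by (induction i; [congruence | apply Hf; assumption]).
    exists f; split; [assumption|]. intros i; split; [apply Hf|]; apply HP.
Qed.

Section TauPaths.
Context {L : LTS}.

Lemma taus_trans {a b c} : taus L a b -> taus L b c -> taus L a c.
Proof. induction 1; eauto using taus_step. Qed.

Lemma taus_tau {a b} : trans L a (tau L) b -> taus L a b.
Proof. eauto using taus_step, taus_refl. Qed.

Lemma taus_inv_r {a b} : taus L a b -> a = b \/ exists c, taus L a c /\ trans L c (tau L) b.
Proof.
  induction 1 as [s | s s' t Hs _ [<- | [c [Hc Hct]]]]; auto.
  - right; exists s; split; [constructor | assumption].
  - right; exists c; split; [eapply taus_step; eauto | assumption].
Qed.

Fixpoint taus_n (n : nat) (a b : St L) : Prop :=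
  match n with
  | 0 => a = b
  | S n => exists c, trans L a (tau L) c /\ taus_n n c b
  end.

Lemma taus_n_taus {n a b} : taus_n n a b -> taus L a b.
Proof.
  revert a; induction n as [|n IH]; simpl; intros a H.
  - subst; constructor.
  - destruct H as [c [Hac Hcb]]; eapply taus_step; eauto.
Qed.

Lemma taus_taus_n {a b} : taus L a b -> exists n, taus_n n a b.
Proof. induction 1 as [s | s s' t Hs _ [n Hn]]; [exists 0 | exists (S n)]; simpl; eauto. Qed.

Definition opt_step (a : Act L) (t1 t2 : St L) : Prop :=
  trans L t1 a t2 \/ (a = tau L /\ t1 = t2).

Lemma opt_step_tau_taus {t1 t2} : opt_step (tau L) t1 t2 -> taus L t1 t2.
Proof. intros [H | [_ <-]]; [apply taus_tau; assumption | constructor]. Qed.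

Lemma arr_spec m (Rel : St L -> St L -> Prop) s t t1 :
  arr L m Rel s t t1 <-> taus L t t1 /\ (m = mb -> Rel s t /\ Rel s t1).
Proof. destruct m; simpl; intuition discriminate. Qed.

Lemma arr_intro m (Rel : St L -> St L -> Prop) s t t1 :
  taus L t t1 -> (m = mb -> Rel s t) -> (m = mb -> Rel s t1) -> arr L m Rel s t t1.
Proof. destruct m; simpl; auto. Qed.

End TauPaths.

Section StutterClosure.
Variable L : LTS.
Variables x y : mode.
Variable R : St L -> St L -> Prop.
Hypothesis HR : generic_bisim_ed L x y R.

Inductive stutter_closure : St L -> St L -> Prop :=
| sc_base {s t} : R s t -> stutter_closure s t
| sc_sym {s t} : stutter_closure s t -> stutter_closure t s
| sc_trans {s r t} : stutter_closure s r -> stutter_closure r t -> stutter_closure s t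
| sc_stutter {p z u z'} : stutter_closure p z -> stutter_closure p z' ->
    taus L z u -> taus L u z' -> stutter_closure p u.

Local Notation SC := stutter_closure.

Lemma R_simulates_taus s t s1 : R s t -> taus L s s1 -> exists t1, taus L t t1 /\ R s1 t1.
Proof.
  destruct HR as [[_ Hsim] _].
  intros Hst Hs; revert t Hst; induction Hs as [s | s s' u Hss' _ IH]; intros t Hst.
  - exists t; split; [constructor | assumption].
  - destruct (Hsim _ _ _ _ Hst Hss') as [[_ Hs't] | [t' [t1 [t2 [Ht1 [Ht12 [Ht2 Hs't']]]]]]].
    + exact (IH t Hs't).
    + destruct (IH t' Hs't') as [t3 [Ht3 Hu]].
      apply arr_spec in Ht1 as [Ht1 _]; apply arr_spec in Ht2 as [Ht2 _].
      exists t3; split; [|assumption].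
      apply (taus_trans Ht1), (taus_step _ _ _ _ Ht12), (taus_trans Ht2 Ht3).
Qed.

(* Matching a whole [s ->> s1 -a-> s2 ->> s'] path, rather than a single step,
   is what makes this property stable under composition and stuttering. *)
Definition transfer (s t : St L) : Prop :=
  forall s1 a s2 s', taus L s s1 -> trans L s1 a s2 -> taus L s2 s' ->
  exists t1 t2 t', taus L t t1 /\ opt_step a t1 t2 /\ taus L t2 t' /\
    (x = mb -> SC s1 t1) /\ (y = mb -> SC s2 t2) /\ SC s' t'.

Lemma transfer_base s t : R s t -> transfer s t.
Proof.
  destruct HR as [[_ Hsim] _].
  intros Hst s1 a s2 s' Hs1 Ha Hs'.
  destruct (R_simulates_taus _ _ _ Hst Hs1) as [t1 [Ht1 Hs1t1]].
  destruct (Hsim _ _ _ _ Hs1t1 Ha) as [[Hat Hs2t1] | [u' [u1 [u2 [Hu1 [Hu12 [Hu2 Hs2u']]]]]]].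
  - destruct (R_simulates_taus _ _ _ Hs2t1 Hs') as [t' [Ht' Hs't']].
    exists t1, t1, t'.
    split; [assumption | split; [right; auto | split; [assumption|]]].
    split; [|split]; auto using sc_base.
  - apply arr_spec in Hu1 as [Hu1 Hx]; apply arr_spec in Hu2 as [Hu2 Hy].
    destruct (R_simulates_taus _ _ _ Hs2u' Hs') as [t' [Ht' Hs't']].
    exists u1, u2, t'.
    split; [apply (taus_trans Ht1 Hu1) | split; [left; assumption |]].
    split; [apply (taus_trans Hu2 Ht') |].
    split; [intros Hm; apply sc_base, (Hx Hm) |].
    split; [intros Hm; apply sc_base, (Hy Hm) | apply sc_base, Hs't'].
Qed.

Lemma transfer_taus r z r' : SC r z -> transfer r z -> taus L r r' ->
  exists z', taus L z z' /\ SC r' z'.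
Proof.
  intros Hrz Htr Hr'. destruct (taus_inv_r Hr') as [<- | [rl [Hrl Hrlr']]].
  - exists z; split; [constructor | assumption].
  - destruct (Htr rl (tau L) r' r' Hrl Hrlr' (taus_refl _ _))
      as [z1 [z2 [z' [Hz1 [Hz12 [Hz2 [_ [_ Hr'z']]]]]]]].
    exists z'; split; [|assumption].
    apply (taus_trans Hz1), (taus_trans (opt_step_tau_taus Hz12) Hz2).
Qed.

Lemma transfer_stutter r z r1 r' : SC r z -> transfer r z -> taus L r r1 -> taus L r1 r' ->
  exists z1 z', taus L z z1 /\ taus L z1 z' /\ (x = mb \/ y = mb -> SC r1 z1) /\ SC r' z'.
Proof.
  intros Hrz Htr Hr1 Hr'.
  assert (Hx : x = mo \/ x = mb) by (destruct x; auto).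
  assert (Hy : y = mo \/ y = mb) by (destruct y; auto).
  destruct Hx as [Hx | Hx]; [destruct Hy as [Hy | Hy] |].
  - destruct (transfer_taus _ _ _ Hrz Htr (taus_trans Hr1 Hr')) as [z' [Hz' Hr'z']].
    exists z, z'; repeat split; [constructor | assumption | | assumption].
    intros [? | ?]; congruence.
  - destruct (taus_inv_r Hr1) as [<- | [rl [Hrl Hrlr1]]].
    + destruct (transfer_taus _ _ _ Hrz Htr Hr') as [z' [Hz' Hr'z']].
      exists z, z'; repeat split; auto using taus_refl.
    + destruct (Htr rl (tau L) r1 r' Hrl Hrlr1 Hr')
        as [z1 [z2 [z' [Hz1 [Hz12 [Hz2 [_ [Hr1z2 Hr'z']]]]]]]].
      exists z2, z'; repeat split; [| assumption | intros _; apply Hr1z2, Hy | assumption].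
      apply (taus_trans Hz1), (opt_step_tau_taus Hz12).
  - destruct Hr' as [r1 | r1 r1' r' Hr1r1' Hr1'r'].
    + destruct (transfer_taus _ _ _ Hrz Htr Hr1) as [z1 [Hz1 Hr1z1]].
      exists z1, z1; repeat split; auto using taus_refl.
    + destruct (Htr r1 (tau L) r1' r' Hr1 Hr1r1' Hr1'r')
        as [z1 [z2 [z' [Hz1 [Hz12 [Hz2 [Hr1z1 [_ Hr'z']]]]]]]].
      exists z1, z'; repeat split; [assumption | | intros _; apply Hr1z1, Hx | assumption].
      apply (taus_trans (opt_step_tau_taus Hz12) Hz2).
Qed.

Lemma transfer_trans p r z : SC r z -> transfer p r -> transfer r z -> transfer p z.
Proof.
  intros Hrz Hpr Hrz' s1 a s2 s' Hs1 Ha Hs'.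
  destruct (Hpr s1 a s2 s' Hs1 Ha Hs')
    as [r1 [r2 [r' [Hr1 [[Hr12 | [Hat <-]] [Hr' [Hs1r1 [Hs2r2 Hs'r']]]]]]]].
  - destruct (Hrz' r1 a r2 r' Hr1 Hr12 Hr')
      as [z1 [z2 [z' [Hz1 [Hz12 [Hz' [Hr1z1 [Hr2z2 Hr'z']]]]]]]].
    exists z1, z2, z'; repeat split; [assumption .. | | | ];
      [intros Hm .. |]; eapply sc_trans; eauto.
  - destruct (transfer_stutter _ _ _ _ Hrz Hrz' Hr1 Hr') as [z1 [z' [Hz1 [Hz' [Hr1z1 Hr'z']]]]].
    subst a. exists z1, z1, z'; repeat split; [assumption | right; auto | assumption | | | ];
      [intros Hm .. |]; eauto using sc_trans.
Qed.

Lemma transfer_prefix p u z' : taus L u z' -> transfer p z' -> transfer p u.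
Proof.
  intros Hu Htr s1 a s2 s' Hs1 Ha Hs'.
  destruct (Htr s1 a s2 s' Hs1 Ha Hs') as [t1 [t2 [t' [Ht1 Hrest]]]].
  exists t1, t2, t'; split; [apply (taus_trans Hu Ht1) | exact Hrest].
Qed.

Lemma transfer_suffix z u p : taus L z u -> transfer z p -> transfer u p.
Proof. intros Hu Htr s1 a s2 s' Hs1. apply Htr, (taus_trans Hu Hs1). Qed.

Lemma stutter_closure_transfer s t : SC s t -> transfer s t /\ transfer t s.
Proof.
  destruct HR as [[Hsym _] _].
  induction 1 as [s t Hst | s t _ [IH1 IH2] | s r t Hsr [IH1 IH2] Hrt [IH3 IH4]
                 | p z u z' _ [IH1 IH2] _ [IH3 IH4] Hzu Huz'].
  - split; apply transfer_base; auto.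
  - split; assumption.
  - split; eapply transfer_trans; eauto using sc_sym.
  - split; [apply (transfer_prefix _ _ _ Huz' IH3) | apply (transfer_suffix _ _ _ Hzu IH2)].
Qed.

Lemma stutter_closure_generic_bisim : generic_bisim L x y SC.
Proof.
  split; [intros s t; apply sc_sym |].
  intros u v u' a Huv Ha.
  destruct (proj1 (stutter_closure_transfer _ _ Huv) u a u' u' (taus_refl _ _) Ha (taus_refl _ _))
    as [v1 [v2 [v' [Hv1 [[Hv12 | [Hat <-]] [Hv' [Huv1 [Hu'v2 Hu'v']]]]]]]].
  - right; exists v', v1, v2; repeat split; try assumption; apply arr_intro; auto.
  - subst a. destruct Hv' as [v1 | v1 w v' Hv1w Hwv'].
    + destruct (taus_inv_r Hv1) as [<- | [vl [Hvl Hvlv1]]]; [left; split; auto |].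
      right; exists v1, vl, v1; repeat split; try assumption.
      * apply arr_intro; [assumption | auto |].
        intros Hm; apply (sc_stutter Huv (Huv1 Hm) Hvl (taus_tau Hvlv1)).
      * apply arr_intro; auto using taus_refl.
    + right; exists v', v1, w; repeat split; try assumption.
      * apply arr_intro; auto.
      * apply arr_intro; [assumption | | auto].
        intros Hm; apply (sc_stutter (Hu'v2 Hm) Hu'v' (taus_tau Hv1w) Hwv').
Qed.

(* Presented by an invariant set rather than a sequence, so that finite runs
   into a divergent state are easily prepended. *)
Definition class_divergent (s : St L) : Prop :=
  exists P : St L -> Prop, P s /\
    forall v, P v -> SC v s /\ exists v1, trans L v (tau L) v1 /\ P v1.

Lemma class_divergent_of_chain (g : nat -> St L) :
  (forall i, trans L (g i) (tau L) (g (S i))) -> (forall i, SC (g i) (g 0)) ->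
  class_divergent (g 0).
Proof.
  intros Hg Hclass. exists (fun v => exists i, v = g i). split; [exists 0; reflexivity |].
  intros v [i ->]. split; [apply Hclass |].
  exists (g (S i)); split; [apply Hg | exists (S i); reflexivity].
Qed.

Lemma class_divergent_chain s : class_divergent s ->
  exists g : nat -> St L, g 0 = s /\ forall i, trans L (g i) (tau L) (g (S i)) /\ SC (g i) s.
Proof.
  intros [P [Ps HP]].
  destruct (dependent_chain (fun v w => trans L v (tau L) w) P s Ps) as [g [g0 Hg]].
  - intros v Pv; apply HP, Pv.
  - exists g; split; [assumption |]. intros i; split; [apply Hg | apply HP, Hg].
Qed.

Lemma class_divergent_prepend a b : taus L a b -> (forall w, taus L a w -> taus L w b -> SC w a) ->
  SC b a -> class_divergent b -> class_divergent a.
Proof.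
  intros Hab Hpath Hba [P [Pb HP]].
  exists (fun v => (taus L a v /\ taus L v b) \/ P v).
  split; [left; split; [constructor | assumption] |].
  intros v [[Hav Hvb] | Pv].
  - split; [apply Hpath; assumption |].
    destruct Hvb as [b | v v1 b Hvv1 Hv1b].
    + destruct (HP b Pb) as [_ [v1 [Hv1 Pv1]]]; eauto.
    + exists v1; split; [assumption |].
      left; split; [apply (taus_trans Hav (taus_tau Hvv1)) | assumption].
  - destruct (HP v Pv) as [Hvb [v1 [Hv1 Pv1]]].
    split; [apply (sc_trans Hvb Hba) | eauto].
Qed.

Lemma divergent_partner_progress u v : R u v -> class_divergent u ->
  exists u' v', taus_plus L v v' /\ R u' v' /\ class_divergent u' /\ SC v' v.
Proof.
  destruct HR as [_ Hdiv]. intros Huv Hu.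
  destruct (class_divergent_chain u Hu) as [g [g0 Hg]].
  destruct (Hdiv u v Huv g g0 (fun i => proj1 (Hg i))) as [v' [k [Hvv' Hgkv']]].
  exists (g k), v'; split; [assumption | split; [assumption | split]].
  - replace (g k) with (g (k + 0)) by (f_equal; lia).
    apply (class_divergent_of_chain (fun i => g (k + i))).
    + intros i; rewrite Nat.add_succ_r; apply Hg.
    + intros i; apply (sc_trans (proj2 (Hg _)) (sc_sym (proj2 (Hg _)))).
  - apply (sc_trans (sc_sym (sc_base Hgkv'))), (sc_trans (proj2 (Hg k)) (sc_base Huv)).
Qed.

Lemma class_divergent_base s t : R s t -> class_divergent s -> class_divergent t.
Proof.
  intros Hst Hs.
  exists (fun v => SC v t /\ exists u v', taus L v v' /\ R u v' /\ class_divergent u /\ SC v' t).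
  split.
  - assert (Htt : SC t t) by apply (sc_trans (sc_sym (sc_base Hst)) (sc_base Hst)).
    split; [assumption |]. exists s, t; repeat split; [constructor | assumption ..].
  - intros v [Hvt [u [v' [Hvv' [Huv' [Hu Hv't]]]]]]. split; [assumption |].
    destruct Hvv' as [v | v v1 v' Hvv1 Hv1v'].
    + destruct (divergent_partner_progress u v Huv' Hu)
        as [u'' [v'' [[v1 [Hvv1 Hv1v'']] [Hu''v'' [Hu'' Hv''v]]]]].
      assert (Hv''t : SC v'' t) by apply (sc_trans Hv''v Hvt).
      exists v1; split; [assumption |]. split; [| exists u'', v''; repeat split; assumption].
      apply sc_sym, (sc_stutter (sc_sym Hvt) (sc_sym Hv''t) (taus_tau Hvv1) Hv1v'').
    + exists v1; split; [assumption |]. split; [| exists u, v'; repeat split; assumption].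
      apply sc_sym, (sc_stutter (sc_sym Hvt) (sc_sym Hv't) (taus_tau Hvv1) Hv1v').
Qed.

Lemma stutter_closure_class_divergent s t : SC s t -> (class_divergent s <-> class_divergent t).
Proof.
  destruct HR as [[Hsym _] _].
  induction 1 as [s t Hst | s t _ IH | s r t _ IH1 _ IH2 | p z u z' Hpz IH1 Hpz' IH2 Hzu Huz'].
  - split; apply class_divergent_base; auto.
  - symmetry; exact IH.
  - rewrite IH1; exact IH2.
  - assert (Hpath : forall w, taus L z w -> taus L w z' -> SC p w)
      by (intros w Hzw Hwz'; apply (sc_stutter Hpz Hpz' Hzw Hwz')).
    assert (Hpu : SC p u) by apply (Hpath u Hzu Huz').
    split; intros Hdiv.
    + apply (class_divergent_prepend u z' Huz').
      * intros w Huw Hwz'. apply (sc_trans (sc_sym (Hpath w (taus_trans Hzu Huw) Hwz')) Hpu).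
      * apply (sc_trans (sc_sym Hpz') Hpu).
      * apply IH2, Hdiv.
    + apply IH1, (class_divergent_prepend z u Hzu).
      * intros w Hzw Hwu. apply (sc_trans (sc_sym (Hpath w Hzw (taus_trans Hwu Huz'))) Hpz).
      * apply (sc_trans (sc_sym Hpu) Hpz).
      * exact Hdiv.
Qed.

Lemma stutter_closure_divergence t (g : nat -> St L) :
  (forall i, trans L (g i) (tau L) (g (S i))) -> (forall i, SC (g i) t) ->
  exists t1, trans L t (tau L) t1 /\ SC t t1.
Proof.
  intros Hg Hgt.
  assert (Hdiv : class_divergent t).
  { apply (stutter_closure_class_divergent (g 0) t (Hgt 0)), class_divergent_of_chain;
      [exact Hg |].
    intros i; apply (sc_trans (Hgt i) (sc_sym (Hgt 0))). }
  destruct Hdiv as [P [Pt HP]]. destruct (HP t Pt) as [_ [t1 [Ht1 Pt1]]].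
  exists t1; split; [assumption | apply sc_sym, (proj1 (HP t1 Pt1))].
Qed.

End StutterClosure.

Lemma last_history {L : LTS} (p : nat -> config L) n d : last (history L p n) d = p n.
Proof. unfold history. rewrite seq_S, map_app. apply last_last. Qed.

Lemma unchecked_spoiler_move {L : LTS} {E : tag -> Prop} {c c' : config L} :
  move L E c c' -> cown c = Spoiler -> crew c' = false ->
  (cch c <> None /\ c' = mkCfg Duplicator (cpos c) (cch c) (cmem c) false) \/
  (cch c = None /\ exists a s', trans L (fst (cpos c)) a s' /\
     c' = mkCfg Duplicator (cpos c) (Some (a, s')) (Some (snd (cpos c), Frown)) false).
Proof. intros Hm Ho Hr. destruct Hm; simpl in *; try discriminate; [left | right]; eauto. Qed.

Section Game.
Variable L : LTS.
Variables x y : mode.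
Variable Q : St L -> St L -> Prop.
Hypothesis Q_bisim : generic_bisim L x y Q.
Hypothesis Q_trans : forall s r t, Q s r -> Q r t -> Q s t.
Hypothesis Q_stutter : forall p z u z', Q p z -> Q p z' -> taus L z u -> taus L u z' -> Q p u.
Hypothesis Q_divergence : forall t (g : nat -> St L),
  (forall i, trans L (g i) (tau L) (g (S i))) -> (forall i, Q (g i) t) ->
  exists t1, trans L t (tau L) t1 /\ Q t t1.

Local Notation E := (Exy x y).

(* [n] counts the internal steps still to be taken from the memorised state [vb].
   A [Smile] memory means the [a]-step is already done; at least one internal
   step then remains, since otherwise Duplicator would have played [mD2b]. *)
Definition plan (p w : St L) (a : Act L) (u' vb : St L) (f : tag) (n : nat) : Prop :=
  Q p w /\
  match f with
  | Frown => (x = mb -> Q p vb) /\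
      exists n1 n2 v1 v2 v', taus_n n1 vb v1 /\ trans L v1 a v2 /\ taus_n n2 v2 v' /\
        (x = mb -> Q p v1) /\ (y = mb -> Q u' v2) /\ Q u' v' /\ n = n1 + n2
  | Smile => (y = mb -> p = u' /\ Q u' vb) /\ exists v', taus_n (S n) vb v' /\ Q u' v'
  end.

Definition pending (c : config L) (n : nat) : Prop :=
  match c with
  | mkCfg _ (p, w) (Some (a, u')) (Some (vb, f)) _ => plan p w a u' vb f n
  | _ => False
  end.

Definition has_plan (c : config L) : Prop := exists n, pending c n.

Definition settled (c : config L) : Prop :=
  cown c = Spoiler /\ cch c = None /\ cmem c = None /\ Q (fst (cpos c)) (snd (cpos c)).

Definition checked_settled (c : config L) : Prop := settled c /\ crew c = true.

Definition tau_matchable (c : config L) : Prop :=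
  exists u' vb v1, cch c = Some (tau L, u') /\ cmem c = Some (vb, Frown) /\
    trans L vb (tau L) v1 /\ Q u' v1.

Definition stutter (c c' : config L) : Prop :=
  exists u' vb, cch c = Some (tau L, u') /\ cmem c = Some (vb, Frown) /\ Q u' vb /\
    c' = mkCfg Spoiler (u', vb) None None false.

Definition good_spoiler (c : config L) : Prop := settled c \/ (cown c = Spoiler /\ has_plan c).

Definition good_duplicator (c : config L) : Prop :=
  cown c = Duplicator /\ ((exists c', stutter c c') \/ has_plan c).

Definition good (c : config L) : Prop := good_spoiler c \/ good_duplicator c.

Definition progress (c : config L) (n : nat) (c' : config L) : Prop :=
  move L E c c' /\
  (checked_settled c' \/ (cown c' = Spoiler /\ crew c' = false /\ exists m, pending c' m /\ m < n)).

Definition improves (c c' : config L) : Prop :=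
  exists m, pending c' m /\ forall n, pending c n -> m < n.

(* An unrewarded [mD1] is the only way to stay unchecked forever, so it is
   allowed only when no plan exists and the memorised state cannot step silently
   into the class of the challenger's target. *)
Definition response (c c' : config L) : Prop :=
  move L E c c' /\
  (checked_settled c'
   \/ (cown c' = Spoiler /\ crew c' = false /\ has_plan c /\ improves c c')
   \/ (~ tau_matchable c /\ ~ has_plan c /\ stutter c c')).

Definition strat (c : config L) : config L := epsilon (inhabits c) (response c).

Lemma frown_plan_step p w a u' vb r n : plan p w a u' vb Frown n ->
  exists c', progress (mkCfg Duplicator (p, w) (Some (a, u')) (Some (vb, Frown)) r) n c'.
Proof.
  intros [Hpw [Hpvb [n1 [n2 [v1 [v2 [v' [Hn1 [Hv12 [Hn2 [Hpv1 [Hu'v2 [Hu'v' ->]]]]]]]]]]]]].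
  destruct n1 as [|k].
  - simpl in Hn1; subst v1. destruct n2 as [|k].
    + simpl in Hn2; subst v2. exists (mkCfg Spoiler (u', v') None None true).
      split; [apply mD2b; assumption | left; repeat split; assumption].
    + assert (Hy : y = mo \/ y = mb) by (destruct y; auto).
      destruct Hy as [Hy | Hy].
      * exists (mkCfg Spoiler (p, w) (Some (a, u')) (Some (v2, Smile)) false).
        split; [apply mD2c; [assumption | exact Hy] |].
        right; split; [reflexivity | split; [reflexivity |]]. exists k; split; [| lia].
        split; [assumption | split; [intros; congruence | exists v'; split; assumption]].
      * exists (mkCfg Spoiler (u', v2) (Some (a, u')) (Some (v2, Smile)) false).
        split; [apply mD2a; assumption |].
        right; split; [reflexivity | split; [reflexivity |]]. exists k; split; [| lia].
        split; [apply Hu'v2, Hy | split; [split; [reflexivity | apply Hu'v2, Hy] |]].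
        exists v'; split; assumption.
  - destruct Hn1 as [c [Hvbc Hcv1]].
    assert (Hmove : exists w', Q p w' /\ (x = mb -> Q p c) /\
              move L E (mkCfg Duplicator (p, w) (Some (a, u')) (Some (vb, Frown)) r)
                       (mkCfg Spoiler (p, w') (Some (a, u')) (Some (c, Frown)) false)).
    { assert (Hx : x = mo \/ x = mb) by (destruct x; auto).
      destruct Hx as [Hx | Hx].
      - exists w; split; [| split]; [assumption | intros; congruence | apply mD3c; assumption].
      - assert (Hpc : Q p c)
          by apply (Q_stutter _ _ _ _ (Hpvb Hx) (Hpv1 Hx) (taus_tau Hvbc) (taus_n_taus Hcv1)).
        exists c; split; [| split]; [assumption | intros _; assumption | apply mD3a; assumption]. }
    destruct Hmove as [w' [Hpw' [Hpc Hmove]]].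
    exists (mkCfg Spoiler (p, w') (Some (a, u')) (Some (c, Frown)) false).
    split; [exact Hmove |]. right; split; [reflexivity | split; [reflexivity |]].
    exists (k + n2); split; [| simpl; lia].
    split; [assumption | split; [assumption |]].
    exists k, n2, v1, v2, v'; repeat split; assumption.
Qed.

Lemma smile_plan_step p w a u' vb r n : plan p w a u' vb Smile n ->
  exists c', progress (mkCfg Duplicator (p, w) (Some (a, u')) (Some (vb, Smile)) r) n c'.
Proof.
  intros [Hpw [Hyvb [v' [[c [Hvbc Hcv']] Hu'v']]]].
  destruct n as [|k].
  - simpl in Hcv'; subst c. exists (mkCfg Spoiler (u', v') None None true).
    split; [apply mD3b; assumption | left; repeat split; assumption].
  - assert (Hy : y = mo \/ y = mb) by (destruct y; auto).
    destruct Hy as [Hy | Hy].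
    + exists (mkCfg Spoiler (p, w) (Some (a, u')) (Some (c, Smile)) false).
      split; [apply mD3c; [assumption | exact Hy] |].
      right; split; [reflexivity | split; [reflexivity |]]. exists k; split; [| lia].
      split; [assumption | split; [intros; congruence | exists v'; split; assumption]].
    + destruct (Hyvb Hy) as [<- Hpvb].
      assert (Hpc : Q p c)
        by apply (Q_stutter _ _ _ _ Hpvb Hu'v' (taus_tau Hvbc) (taus_n_taus Hcv')).
      exists (mkCfg Spoiler (p, c) (Some (a, p)) (Some (c, Smile)) false).
      split; [apply mD3a; assumption |].
      right; split; [reflexivity | split; [reflexivity |]]. exists k; split; [| lia].
      split; [assumption | split; [intros _; split; [reflexivity | assumption] |]].
      exists v'; split; assumption.
Qed.

Lemma pending_progress c n : cown c = Duplicator -> pending c n -> exists c', progress c n c'.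
Proof.
  destruct c as [o [p w] [[a u'] |] [[vb [|]] |] r]; simpl; intros Ho Hplan; subst o;
    try contradiction.
  - apply frown_plan_step; assumption.
  - apply smile_plan_step; assumption.
Qed.

Lemma pending_challenged c n : pending c n -> cch c <> None.
Proof. destruct c as [o [p w] [ch |] mem r]; simpl; [intros _; discriminate | intros []]. Qed.

Lemma challenge_good p w a p' r : Q p w -> trans L p a p' ->
  good_duplicator (mkCfg Duplicator (p, w) (Some (a, p')) (Some (w, Frown)) r).
Proof.
  intros Hpw Ha. split; [reflexivity |].
  destruct (proj2 Q_bisim p w p' a Hpw Ha) as [[-> Hp'w] | [v' [v1 [v2 [Hv1 [Hv12 [Hv2 Hp'v']]]]]]].
  - left. eexists; exists p', w; repeat split; assumption.
  - right. apply arr_spec in Hv1 as [Hv1 Hx]; apply arr_spec in Hv2 as [Hv2 Hy].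
    destruct (taus_taus_n Hv1) as [n1 Hn1]; destruct (taus_taus_n Hv2) as [n2 Hn2].
    exists (n1 + n2); split; [assumption | split; [intros Hm; apply (Hx Hm) |]].
    exists n1, n2, v1, v2, v'; repeat split; try assumption.
    + intros Hm; apply (Hx Hm).
    + intros Hm; apply (Hy Hm).
Qed.

Lemma good_spoiler_pos c : good_spoiler c -> cown c = Spoiler /\ Q (fst (cpos c)) (snd (cpos c)).
Proof.
  intros [[Ho [_ [_ HQ]]] | [Ho [n Hn]]]; split; try assumption.
  destruct c as [o [p w] [[a u'] |] [[vb f] |] r]; simpl in *; try contradiction.
  apply (proj1 Hn).
Qed.

Lemma good_spoiler_move c c' : good_spoiler c -> move L E c c' -> good_duplicator c'.
Proof.
  intros Hc Hm. destruct Hm; destruct (good_spoiler_pos _ Hc) as [Ho HQ]; simpl in Ho, HQ;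
    try discriminate.
  - destruct Hc as [[_ [Hnone _]] | [_ Hplan]]; [contradiction |].
    split; [reflexivity | right; exact Hplan].
  - apply challenge_good; assumption.
  - apply challenge_good; assumption.
  - apply challenge_good; [apply (proj1 Q_bisim) |]; assumption.
Qed.

Lemma response_exists c : good_duplicator c -> exists c', response c c'.
Proof.
  intros [Ho Hc].
  destruct (classic (tau_matchable c)) as [[u' [vb [v1 [Hch [Hmem [Hvbv1 Hu'v1]]]]]] | Hntm].
  { exists (mkCfg Spoiler (u', v1) None None true).
    split; [| left; repeat split; assumption].
    destruct c as [o pos ch mem r]; simpl in *; subst; destruct pos; apply mD2b; assumption. }
  destruct (classic (has_plan c)) as [Hplan | Hnplan].
  - destruct (dec_inh_nat_subset_has_unique_least_element (pending c) (fun n => classic _) Hplan)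
      as [n0 [[Hn0 Hmin] _]].
    destruct (pending_progress c n0 Ho Hn0) as [c' [Hm [Hck | [Ho' [Hr' [m [Hm' Hlt]]]]]]].
    + exists c'; split; [assumption | left; assumption].
    + exists c'; split; [assumption | right; left].
      split; [assumption | split; [assumption | split; [assumption |]]].
      exists m; split; [assumption |]. intros n Hn; specialize (Hmin n Hn); lia.
  - destruct Hc as [[c' Hst] | Hplan]; [| contradiction].
    exists c'; split; [| right; right; split; [| split]; assumption].
    destruct Hst as [u' [vb [Hch [Hmem [_ ->]]]]].
    destruct c as [o pos ch mem r]; simpl in *; subst; destruct pos; apply mD1; reflexivity.
Qed.

Lemma strat_response c : good_duplicator c -> response c (strat c).
Proof. intros Hc. apply (epsilon_spec (inhabits c) (response c)), response_exists, Hc. Qed.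

Lemma response_good c c' : response c c' -> good_spoiler c'.
Proof.
  intros [_ [[Hs _] | [[Ho [_ [_ [m [Hm _]]]]] | [_ [_ [u' [vb [_ [_ [Hq ->]]]]]]]]]].
  - left; assumption.
  - right; split; [assumption | exists m; assumption].
  - left; repeat split; assumption.
Qed.

Lemma consistent_prefix_good c0 p n : good c0 ->
  consistent_prefix L E (fun h => strat (last h c0)) c0 p n -> forall i, i <= n -> good (p i).
Proof.
  intros Hc0 [H0 Hstep] i. induction i as [|i IH]; intros Hi.
  - rewrite H0; assumption.
  - destruct (Hstep i ltac:(lia)) as [Hm Hd]. destruct (IH ltac:(lia)) as [Hs | Hdup].
    + right; apply (good_spoiler_move _ _ Hs Hm).
    + left. rewrite (Hd (proj1 Hdup)), last_history.
      apply (response_good _ _ (strat_response _ Hdup)).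
Qed.

Section UncheckedTail.
Variable p : nat -> config L.
Hypothesis p_move : forall k, move L E (p k) (p (S k)).
Hypothesis p_strat : forall k, cown (p k) = Duplicator -> p (S k) = strat (p k).
Hypothesis p_good : forall k, good (p k).
Variable N : nat.
Hypothesis p_unchecked : forall k, N <= k -> crew (p k) = false.

Lemma tail_response k : cown (p k) = Duplicator -> response (p k) (p (S k)).
Proof.
  intros Ho. rewrite (p_strat k Ho). apply strat_response.
  destruct (p_good k) as [Hs | Hd]; [| assumption].
  destruct (good_spoiler_pos _ Hs) as [Ho' _]; congruence.
Qed.

Lemma tail_pending_persists k m : N <= k -> cown (p k) = Spoiler -> pending (p k) m ->
  cown (p (S k)) = Duplicator /\ pending (p (S k)) m.
Proof.
  intros Hk Ho Hm.
  destruct (unchecked_spoiler_move (p_move k) Ho (p_unchecked (S k) ltac:(lia)))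
    as [[_ ->] | [Hnone _]]; [| contradiction (pending_challenged _ _ Hm Hnone)].
  split; [reflexivity |]. revert Hm; destruct (p k); exact id.
Qed.

Lemma tail_no_plan k : N <= k -> cown (p k) = Duplicator -> ~ has_plan (p k).
Proof.
  intros Hk Ho [n Hn]. revert k Hk Ho Hn.
  induction n as [n IH] using lt_wf_ind. intros k Hk Ho Hn.
  destruct (tail_response k Ho) as [_ [[_ Hck] | [[Ho' [_ [_ [m [Hm Hlt]]]]] | [_ [Hnp _]]]]].
  - rewrite p_unchecked in Hck; [discriminate | lia].
  - destruct (tail_pending_persists (S k) m ltac:(lia) Ho' Hm) as [Ho'' Hm''].
    apply (IH m (Hlt n Hn) (S (S k))); [lia | assumption | assumption].
  - apply Hnp; exists n; assumption.
Qed.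

Lemma tail_stutters k : N <= k -> cown (p k) = Duplicator ->
  ~ tau_matchable (p k) /\ stutter (p k) (p (S k)).
Proof.
  intros Hk Ho.
  destruct (tail_response k Ho) as [_ [[_ Hck] | [[_ [_ [Hplan _]]] | [Hntm [_ Hst]]]]].
  - rewrite p_unchecked in Hck; [discriminate | lia].
  - contradiction (tail_no_plan k Hk Ho Hplan).
  - split; assumption.
Qed.

Lemma tail_settled_step k : N <= k -> settled (p k) ->
  exists u1, trans L (fst (cpos (p k))) (tau L) u1 /\
    cpos (p (S (S k))) = (u1, snd (cpos (p k))) /\ settled (p (S (S k))) /\
    ~ (exists v1, trans L (snd (cpos (p k))) (tau L) v1 /\ Q u1 v1).
Proof.
  intros Hk [Ho [Hnone _]].
  destruct (unchecked_spoiler_move (p_move k) Ho (p_unchecked (S k) ltac:(lia)))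
    as [[Hsome _] | [_ [a [u1 [Ha Hpk1]]]]]; [contradiction |].
  assert (Ho1 : cown (p (S k)) = Duplicator) by (rewrite Hpk1; reflexivity).
  destruct (tail_stutters (S k) ltac:(lia) Ho1) as [Hntm [u' [vb [Hch [Hmem [Hq Hpk2]]]]]].
  rewrite Hpk1 in Hch, Hmem, Hntm; simpl in Hch, Hmem.
  injection Hch as -> ->. injection Hmem as <-.
  exists u'; split; [assumption |]. rewrite Hpk2.
  split; [reflexivity | split; [repeat split; assumption |]].
  intros [v1 [Hv1 Hq1]]. apply Hntm. exists u', (snd (cpos (p k))), v1; repeat split; assumption.
Qed.

Lemma tail_settled_exists : exists K, N <= K /\ settled (p K).
Proof.
  assert (HD : exists K, N <= K /\ cown (p K) = Duplicator).
  { destruct (p_good N) as [Hs | [Ho _]].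
    - exists (S N); split; [lia |]. apply (proj1 (good_spoiler_move _ _ Hs (p_move N))).
    - exists N; split; [lia | assumption]. }
  destruct HD as [K [HK Ho]]. destruct (tail_stutters K HK Ho) as [_ [u' [vb [_ [_ [Hq Hpk]]]]]].
  exists (S K); split; [lia | rewrite Hpk; repeat split; assumption].
Qed.

Lemma unchecked_tail_absurd : False.
Proof.
  destruct tail_settled_exists as [K [HK HsK]].
  set (v0 := snd (cpos (p K))).
  assert (Hg : forall i, settled (p (K + 2 * i)) /\ snd (cpos (p (K + 2 * i))) = v0).
  { induction i as [|i [Hs Hv]].
    - rewrite Nat.mul_0_r, Nat.add_0_r; split; [assumption | reflexivity].
    - destruct (tail_settled_step (K + 2 * i) ltac:(lia) Hs) as [u1 [_ [Hpos [Hs' _]]]].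
      replace (K + 2 * S i) with (S (S (K + 2 * i))) by lia.
      split; [assumption | rewrite Hpos; exact Hv]. }
  assert (Hchain : forall i,
    trans L (fst (cpos (p (K + 2 * i)))) (tau L) (fst (cpos (p (K + 2 * S i))))).
  { intros i. destruct (tail_settled_step (K + 2 * i) ltac:(lia) (proj1 (Hg i)))
      as [u1 [Hu1 [Hpos _]]].
    replace (K + 2 * S i) with (S (S (K + 2 * i))) by lia. rewrite Hpos. exact Hu1. }
  destruct (Q_divergence v0 (fun i => fst (cpos (p (K + 2 * i)))) Hchain) as [t1 [Ht1 Hv0t1]].
  { intros i. destruct (Hg i) as [[_ [_ [_ HQ]]] Hv]. rewrite Hv in HQ. exact HQ. }
  destruct (tail_settled_step K HK HsK) as [u1 [_ [Hpos [[_ [_ [_ HQ]]] Hstuck]]]].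
  rewrite Hpos in HQ; simpl in HQ.
  apply Hstuck. exists t1; split; [exact Ht1 | apply (Q_trans _ _ _ HQ Hv0t1)].
Qed.

End UncheckedTail.

Theorem game_equiv_of_closed_bisim s t : Q s t -> game_equiv L E s t.
Proof.
  intros Hst.
  set (c0 := mkCfg Spoiler (s, t) None None false).
  assert (Hc0 : good c0) by (left; left; repeat split; exact Hst).
  exists (fun h => strat (last h c0)). split.
  - intros p n Hpre Ho. rewrite last_history.
    destruct (consistent_prefix_good _ _ _ Hc0 Hpre n (le_n n)) as [Hs | Hd].
    + destruct (good_spoiler_pos _ Hs) as [Ho' _]; congruence.
    + apply (strat_response _ Hd).
  - intros p Hplay N. apply NNPP; intros Hnone.
    refine (unchecked_tail_absurd p _ _ _ N _).
    + intros k; apply (proj2 (Hplay (S k)) k); lia.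
    + intros k Ho. rewrite <- (last_history p k c0).
      apply (proj2 (Hplay (S k)) k); [lia | assumption].
    + intros k. apply (consistent_prefix_good _ _ _ Hc0 (Hplay k) k (le_n k)).
    + intros k Hk. destruct (crew (p k)) eqn:Hr; [| reflexivity].
      exfalso; apply Hnone; exists k; split; assumption.
Qed.

End Game.

Theorem lemma6p7 (L : LTS) (x y : mode) (s t : St L) :
  bisim_ed L x y s t -> game_equiv L (Exy x y) s t.
Proof.
  intros [R [HR Hst]].
  apply (game_equiv_of_closed_bisim L x y (stutter_closure L R)).
  - exact (stutter_closure_generic_bisim L x y R HR).
  - exact (@sc_trans L R).
  - exact (@sc_stutter L R).
  - exact (stutter_closure_divergence L x y R HR).
  - apply sc_base, Hst.
Qed.
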